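(* Consider a network of $n$ parallel roads (indexed by $i\in[n]$) shared by $m$ vehicle types (indexed by $j\in[m]$), where vehicle type $j$ has total demand $\bar f^j\ge 0$. A routing is a vector $f=(f^j_i)_{i\in[n],j\in[m]}$; it is feasible if $f^j_i\ge 0$ for all $i,j$ and $\sum_{i\in[n]} f^j_i=\bar f^j$ for all $j$. The latency of road $i$ is $\ell_i(f)=b_i+\sum_{j\in[m]} a^j_i f^j_i$ with constants $a^j_i\ge 0$, $b_i\ge 0$, and the social cost is $J(f)=\sum_{i\in[n]}\big(\sum_{j\in[m]} f^j_i\big)\ell_i(f)$. Let $\mathcal F^*$ be the set of feasible routings minimizing $J$. For a routing $f$, let $G(f)$ be the bipartite graph whose node set consists of the $n$ roads and the $m$ vehicle types, with an edge between road $i$ and vehicle type $j$ if and only if $f^j_i>0$. Then there exists $f\in\mathcal F^*$ such that $G(f)$ is acyclic.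
   Context: Parallel-road network with multiple vehicle types: flow $f^j_i$ of type $j$ on road $i$; each road's latency is affine in the flows of all vehicle types, with type-dependent coefficients $a^j_i$. The social cost is the total latency experienced by all flow. *)

From mathcomp Require Import all_boot all_order all_algebra.
From mathcomp Require Import reals.
Set Implicit Arguments. Unset Strict Implicit. Unset Printing Implicit Defensive.
Import Order.TTheory GRing.Theory Num.Theory.
Local Open Scope ring_scope.

(* A routing: f i j = flow of vehicle type j on road i. *)
Definition routing (R : realType) (n m : nat) := 'I_n -> 'I_m -> R.

Definition feasible (R : realType) (n m : nat) (fbar : 'I_m -> R)
  (f : routing R n m) : Prop :=
  (forall i j, 0 <= f i j) /\ (forall j, \sum_(i < n) f i j = fbar j).

Definition latency (R : realType) (n m : nat) (a : 'I_n -> 'I_m -> R)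
  (b : 'I_n -> R) (f : routing R n m) (i : 'I_n) : R :=
  b i + \sum_(j < m) a i j * f i j.

Definition social_cost (R : realType) (n m : nat) (a : 'I_n -> 'I_m -> R)
  (b : 'I_n -> R) (f : routing R n m) : R :=
  \sum_(i < n) (\sum_(j < m) f i j) * latency a b f i.

Definition optimal (R : realType) (n m : nat) (fbar : 'I_m -> R)
  (a : 'I_n -> 'I_m -> R) (b : 'I_n -> R) (f : routing R n m) : Prop :=
  feasible fbar f /\
  forall g : routing R n m, feasible fbar g -> social_cost a b f <= social_cost a b g.

Definition Gf (R : realType) (n m : nat) (f : routing R n m) :
  rel ('I_n + 'I_m)%type :=
  fun u v => match u, v with
             | inl i, inr j => 0 < f i j
             | inr j, inl i => 0 < f i j
             | _, _ => false
             end.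

(* A simple graph (symmetric relation e) is acyclic if it contains no cycle:
   no duplicate-free closed walk v_0 ... v_{k-1} v_0 with k >= 3 vertices. *)
Definition acyclic (T : finType) (e : rel T) : Prop :=
  forall s : seq T, uniq s -> (3 <= size s)%N -> ~~ cycle e s.

(* If the bipartite graph G(f) of an optimal routing f contains a cycle, give
   its edges alternately the weights +1 and -1 (road-to-type and type-to-road
   steps).  The resulting circulation e has zero row and column sums, so moving
   along f + t e keeps every demand and every road's total flow unchanged;
   hence the latency of each road, and the cost, change affinely in t.  Moving
   in the direction in which the cost does not increase until some positive
   flow reaches zero gives an optimal routing with strictly smaller support.
   Iterating from an optimum, which exists by compactness of the feasible set,
   ends at an acyclic optimum.  No convexity is used. *)

From mathcomp Require Import all_boot all_order all_algebra.
From mathcomp Require Import reals.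
From mathcomp Require Import mathcomp_extra boolp classical_sets topology normedtype derive.
Set Implicit Arguments. Unset Strict Implicit. Unset Printing Implicit Defensive.
Import Order.TTheory GRing.Theory Num.Theory.
Import numFieldTopology.Exports numFieldNormedType.Exports.
Local Open Scope ring_scope.

Definition circulation (I J : finType) (R : zmodType) (e : I -> J -> R) : Prop :=
  (forall i, \sum_j e i j = 0) /\ (forall j, \sum_i e i j = 0).

Lemma circulationN (I J : finType) (R : zmodType) (e : I -> J -> R) :
  circulation e -> circulation (fun i j => - e i j).
Proof.
by case=> row col; split=> [i|j]; rewrite sumrN ?row ?col oppr0.
Qed.

Lemma exists_neg_of_sum_eq0 (T : finType) (R : realDomainType) (F : T -> R) k :
  \sum_i F i = 0 -> F k != 0 -> exists k', F k' < 0.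
Proof.
move=> F_sum Fk_neq0.
have [k' /= Fk'_lt0|no_neg] := pickP [pred k' | F k' < 0]; first by exists k'.
have F_ge0 i : true -> 0 <= F i by rewrite leNgt (negbT (no_neg i)).
by rewrite (psumr_eq0P F_ge0 F_sum) ?eqxx in Fk_neq0.
Qed.

Lemma ratio_test (T : finType) (R : realFieldType) (x d : T -> R) p1 :
  (forall p, 0 <= x p) -> d p1 < 0 ->
  exists t, [/\ 0 <= t, forall p, 0 <= x p + t * d p
            & exists2 p0, d p0 < 0 & x p0 + t * d p0 = 0].
Proof.
move=> x_ge0 dp1_lt0; pose ratio p := x p / - d p.
have [p0 /= dp0_lt0 ratio_min] := arg_minP ratio (P := [pred p | d p < 0]) dp1_lt0.
have t_ge0 : 0 <= ratio p0 by rewrite divr_ge0 // oppr_ge0 ltW.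
exists (ratio p0); split => //.
- move=> p; have [dp_lt0|dp_ge0] := ltP (d p) 0; last by rewrite addr_ge0 // mulr_ge0.
  have := ratio_min p dp_lt0; rewrite /= {2}/ratio ler_pdivlMr ?oppr_gt0 //.
  by rewrite mulrN -subr_ge0 opprK.
- by exists p0; rewrite // /ratio invrN mulrN mulNr -mulrA mulVf ?lt_eqF // mulr1 subrr.
Qed.

Lemma card_pos_shift_lt (T : finType) (R : numDomainType) (x d : T -> R) t p0 :
  (forall p, 0 <= x p) -> (forall p, d p != 0 -> 0 < x p) ->
  d p0 != 0 -> x p0 + t * d p0 = 0 ->
  (#|[set p | (0 < x p + t * d p)%R]| < #|[set p | (0 < x p)%R]|)%N.
Proof.
move=> x_ge0 d_supp dp0_neq0 shift_p0_eq0.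
apply: fintype.proper_card; apply/fintype.properP; split.
  apply/fintype.subsetP => p; rewrite !inE; apply: contraTT.
  rewrite lt0r x_ge0 andbT negbK => /eqP xp_eq0.
  have dp_eq0 : d p = 0 by apply/eqP; apply: (contraNT (d_supp p)); rewrite xp_eq0 ltxx.
  by rewrite xp_eq0 dp_eq0 mulr0 addr0 ltxx.
by exists p0; rewrite !inE ?shift_p0_eq0 ?ltxx ?d_supp.
Qed.

Section cycle_step.
Variables (T : eqType) (s : seq T).

Definition cycle_step (x y : T) : bool := (x \in s) && (next s x == y).

Lemma cycle_stepE x y : uniq s -> cycle_step x y = (y \in s) && (prev s y == x).
Proof.
move=> s_uniq; apply/andP/andP => [[xs /eqP <-]|[ys /eqP <-]].
  by rewrite mem_next xs prev_next.
by rewrite mem_prev ys next_prev.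
Qed.

End cycle_step.

Section cycle_circulation.
Variables (I J : finType) (R : nzRingType).
Implicit Types (u x y : I + J) (c : bool).

Definition is_inl u : bool := if u is inl _ then true else false.

Lemma sum_and_eq_inl c u :
  \sum_(i : I) (c && (u == inl i))%:R = (c && is_inl u)%:R :> R.
Proof.
case: c; last by rewrite big1.
case: u => [i0|j] /=; last by rewrite big1.
rewrite (bigD1 i0) //= eqxx big1 ?addr0 // => i /negbTE i_neq.
by rewrite (inj_eq inl_inj) eq_sym i_neq.
Qed.

Lemma sum_and_eq_inr c u :
  \sum_(j : J) (c && (u == inr j))%:R = (c && ~~ is_inl u)%:R :> R.
Proof.
case: c; last by rewrite big1.
case: u => [i|j0] /=; first by rewrite big1.
rewrite (bigD1 j0) //= eqxx big1 ?addr0 // => j /negbTE j_neq.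
by rewrite (inj_eq inr_inj) eq_sym j_neq.
Qed.

Variables (e : rel (I + J)) (s : seq (I + J)).
Hypothesis e_bipartite : forall x y, e x y -> is_inl x != is_inl y.
Hypotheses (s_uniq : uniq s) (s_cycle : cycle e s).

Lemma is_inl_next x : x \in s -> is_inl (next s x) = ~~ is_inl x.
Proof. by move=> /(next_cycle s_cycle)/e_bipartite; rewrite negb_eqb => /addbP <-. Qed.

Lemma is_inl_prev x : x \in s -> is_inl (prev s x) = ~~ is_inl x.
Proof.
by move=> /(prev_cycle s_cycle)/e_bipartite; rewrite negb_eqb => /addbP <-; rewrite negbK.
Qed.

Definition cycle_circulation (i : I) (j : J) : R :=
  (cycle_step s (inl i) (inr j))%:R - (cycle_step s (inr j) (inl i))%:R.

Lemma cycle_circulationP : circulation cycle_circulation.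
Proof.
split=> [i|j]; rewrite /cycle_circulation sumrB.
  under [X in _ - X]eq_bigr do rewrite cycle_stepE //.
  rewrite !sum_and_eq_inr; case si: (inl i \in s); last by rewrite subrr.
  by rewrite is_inl_next // is_inl_prev // subrr.
under [X in X - _]eq_bigr do rewrite cycle_stepE //.
rewrite !sum_and_eq_inl; case sj: (inr j \in s); last by rewrite subrr.
by rewrite is_inl_next // is_inl_prev // subrr.
Qed.

Lemma cycle_circulation_supp i j :
  cycle_circulation i j != 0 -> e (inl i) (inr j) || e (inr j) (inl i).
Proof.
rewrite /cycle_circulation /cycle_step.
case: (boolP (_ && _)) => [/andP[si /eqP <-] _|_]; first by rewrite next_cycle.
case: (boolP (_ && _)) => [/andP[sj /eqP <-] _|_]; first by rewrite next_cycle ?orbT.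
by rewrite subrr eqxx.
Qed.

Lemma cycle_circulation_neq0 :
  (3 <= size s)%N -> exists i j, cycle_circulation i j != 0.
Proof.
case def_s: s => [|x [|y [|z r]]] // _.
have [x_neq_y x_neq_z] : x != y /\ x != z.
  by move: s_uniq; rewrite def_s /= !inE !negb_or => /andP[/and3P[]].
have xy_sides : is_inl x != is_inl y.
  by apply: e_bipartite; move: s_cycle; rewrite def_s => /andP[].
have step_xy : cycle_step s x y by rewrite def_s /cycle_step mem_head /next /= eqxx.
have step_yx : cycle_step s y x = false.
  rewrite def_s /cycle_step /next /= [y == x]eq_sym (negPf x_neq_y) eqxx.
  by rewrite [z == x]eq_sym (negPf x_neq_z) andbF.
case: x y step_xy step_yx xy_sides {def_s x_neq_y x_neq_z}
  => [i|j] [i'|j'] step_xy step_yx //= _.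
- by exists i, j'; rewrite /cycle_circulation step_xy step_yx subr0 oner_eq0.
- by exists i', j; rewrite /cycle_circulation step_xy step_yx sub0r oppr_eq0 oner_eq0.
Qed.

End cycle_circulation.

Section descent.
Variables (R : realType) (n m : nat) (fbar : 'I_m -> R).
Variables (a : 'I_n -> 'I_m -> R) (b : 'I_n -> R).
Implicit Types (f g e : routing R n m) (t : R).

Definition shift f e t : routing R n m := fun i j => f i j + t * e i j.

Definition cost_slope f e : R :=
  \sum_i (\sum_j f i j) * (\sum_j a i j * e i j).

Lemma social_cost_shift f e t : (forall i, \sum_j e i j = 0) ->
  social_cost a b (shift f e t) = social_cost a b f + t * cost_slope f e.
Proof.
move=> e_row; rewrite /social_cost /latency /cost_slope mulr_sumr -big_split /=.
apply: eq_bigr => i _; rewrite /shift big_split /= -mulr_sumr e_row mulr0 addr0.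
under [X in b i + X]eq_bigr do rewrite mulrDr mulrCA.
by rewrite big_split /= -mulr_sumr addrA mulrDr mulrCA.
Qed.

Lemma cost_slopeN f e : cost_slope f (fun i j => - e i j) = - cost_slope f e.
Proof.
rewrite /cost_slope -sumrN; apply: eq_bigr => i _; rewrite -mulrN -sumrN.
by under [X in _ * X = _]eq_bigr do rewrite mulrN.
Qed.

Lemma optimal_shift f e t : optimal fbar a b f -> circulation e ->
  cost_slope f e <= 0 -> 0 <= t -> (forall i j, 0 <= shift f e t i j) ->
  optimal fbar a b (shift f e t).
Proof.
move=> [[_ f_sum] f_min] [e_row e_col] slope_le0 t_ge0 g_ge0; split.
  split=> // j; rewrite /shift big_split /= -mulr_sumr e_col mulr0 addr0.
  exact: f_sum.
move=> h h_feas; apply: le_trans (f_min h h_feas).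
by rewrite social_cost_shift // gerDl mulr_ge0_le0.
Qed.

Definition flow_support f : {set 'I_n * 'I_m} := [set p | 0 < f p.1 p.2].

Lemma optimal_descent f e : optimal fbar a b f -> circulation e ->
  (forall i j, e i j != 0 -> 0 < f i j) -> (exists i j, e i j != 0) ->
  exists g, optimal fbar a b g /\ (#|flow_support g| < #|flow_support f|)%N.
Proof.
move=> f_opt; wlog slope_le0 : e / cost_slope f e <= 0 => [descent|].
  have [/descent//|/ltW slope_ge0 e_circ e_supp [i [j e_neq0]]] := leP (cost_slope f e) 0.
  apply: (descent (fun i j => - e i j)); rewrite ?cost_slopeN ?oppr_le0 //.
  - exact: circulationN.
  - by move=> i' j'; rewrite oppr_eq0; exact: e_supp.
  - by exists i, j; rewrite oppr_eq0.
move=> e_circ e_supp [i1 [j1 e_neq0]].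
have f_ge0 (p : 'I_n * 'I_m) : 0 <= f p.1 p.2 by case: f_opt => -[].
have [i2 e_lt0] := exists_neg_of_sum_eq0 (e_circ.2 j1) e_neq0.
have [t [t_ge0 g_ge0 [p0 ep0_lt0 gp0_eq0]]] :=
  ratio_test (d := fun p => e p.1 p.2) (p1 := (i2, j1)) f_ge0 e_lt0.
exists (shift f e t); split.
  by apply: optimal_shift => // i j; exact: (g_ge0 (i, j)).
exact: card_pos_shift_lt f_ge0 (fun p => e_supp p.1 p.2) (ltr0_neq0 ep0_lt0) gp0_eq0.
Qed.

End descent.

Lemma cycle_of_not_acyclic (T : finType) (e : rel T) :
  ~ acyclic e -> exists s, [/\ uniq s, (3 <= size s)%N & cycle e s].
Proof.
move=> /existsNP[s /not_implyP[s_uniq /not_implyP[s_size /negP/negPn s_cycle]]].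
by exists s.
Qed.

Lemma Gf_bipartite (R : realType) (n m : nat) (f : routing R n m) x y :
  Gf f x y -> is_inl x != is_inl y.
Proof. by case: x; case: y. Qed.

Section acyclic_optimum.
Variables (R : realType) (n m : nat) (fbar : 'I_m -> R).
Variables (a : 'I_n -> 'I_m -> R) (b : 'I_n -> R).

Lemma optimal_cycle_descent (f : routing R n m) :
  optimal fbar a b f -> ~ acyclic (Gf f) ->
  exists g, optimal fbar a b g /\ (#|flow_support g| < #|flow_support f|)%N.
Proof.
move=> f_opt /cycle_of_not_acyclic[s [s_uniq s_size s_cycle]].
have f_bip := @Gf_bipartite R n m f.
apply: (optimal_descent (e := cycle_circulation R s)) => //.
- exact: cycle_circulationP _ f_bip s_uniq s_cycle.
- by move=> i j /(cycle_circulation_supp s_cycle); rewrite orbb.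
- exact: cycle_circulation_neq0 _ f_bip s_uniq s_cycle s_size.
Qed.

Lemma optimal_acyclic_exists (f : routing R n m) :
  optimal fbar a b f -> exists g, optimal fbar a b g /\ acyclic (Gf g).
Proof.
elim: {f}_.+1 {-2}f (ltnSn #|flow_support f|) => // k IHk f f_lt f_opt.
have [f_acyclic|f_cyclic] := pselect (acyclic (Gf f)); first by exists f.
have [g [g_opt g_lt]] := optimal_cycle_descent f_opt f_cyclic.
by apply: IHk g_opt; rewrite (leq_trans g_lt) // -ltnS.
Qed.

End acyclic_optimum.

Section existence.
Local Open Scope classical_set_scope.
Import ArrowAsProduct.
Variables (R : realType) (n m : nat) (fbar : 'I_m -> R).

Lemma entry_continuous i j : continuous (fun f : 'I_n -> 'I_m -> R => f i j).
Proof.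
move=> f; apply: (continuous_comp (f := proj i) (g := proj j)); exact: proj_continuous.
Qed.

Lemma sum_continuous (T : topologicalType) (I : Type) (r : seq I) (F : I -> T -> R) :
  (forall i, continuous (F i)) -> continuous (fun x => \sum_(i <- r) F i x).
Proof. by move=> cF; apply: continuous_big => [|i _]; [exact: add_continuous|exact: cF]. Qed.

Lemma social_cost_continuous (a : 'I_n -> 'I_m -> R) (b : 'I_n -> R) :
  continuous (social_cost a b : ('I_n -> 'I_m -> R) -> R).
Proof.
rewrite /social_cost /latency; apply: sum_continuous => i f.
apply: (@continuousM R _ (fun _ => _) (fun _ => _)).
  by apply: sum_continuous => j; exact: entry_continuous.
apply: (@continuousD R _ _ (fun _ => _) (fun _ => _)); first exact: cst_continuous.
apply: sum_continuous => j g; apply: (@continuousM R _ (fun _ => _) (fun _ => _)).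
  exact: cst_continuous.
exact: entry_continuous.
Qed.

Lemma feasible_closed : closed [set f : 'I_n -> 'I_m -> R | feasible fbar f].
Proof.
have -> : [set f : 'I_n -> 'I_m -> R | feasible fbar f] =
    \bigcap_(p in [set: 'I_n * 'I_m]) [set f | 0 <= f p.1 p.2] `&`
    \bigcap_(j in [set: 'I_m]) [set f | \sum_i f i j = fbar j].
  apply/seteqP; split => f /=.
    by case=> f_ge0 f_sum; split => [[i j] _|j _]; [exact: f_ge0|exact: f_sum].
  by case=> f_ge0 f_sum; split => [i j|j]; [exact: (f_ge0 (i, j))|exact: f_sum].
apply: closedI; apply: closed_bigI; [move=> [i j] _|move=> j _].
  apply: (@preimage_closed _ _ (fun f : 'I_n -> 'I_m -> R => f i j) [set x | 0 <= x]).
    by move=> g _; exact: entry_continuous.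
  exact: closed_ge.
apply: (@preimage_closed _ _ (fun f : 'I_n -> 'I_m -> R => \sum_i f i j) [set x | x = fbar j]).
  by move=> g _; apply: sum_continuous => i; exact: entry_continuous.
exact: closed_eq.
Qed.

Lemma feasible_compact : compact [set f : 'I_n -> 'I_m -> R | feasible fbar f].
Proof.
have box_compact := tychonoff (fun i : 'I_n =>
  tychonoff (fun j : 'I_m => @segment_compact R 0 (fbar j))).
apply: (subclosed_compact feasible_closed box_compact).
move=> f [f_ge0 f_sum] i j /=; rewrite in_itv /= f_ge0 -f_sum.
by rewrite (bigD1 i) //= lerDl sumr_ge0.
Qed.

Lemma feasible_one_road (i0 : 'I_n) : (forall j, 0 <= fbar j) ->
  feasible fbar (fun i j => if i == i0 then fbar j else 0).
Proof.
move=> fbar_ge0; split=> [i j|j]; first by case: eqP.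
by rewrite (bigD1 i0) //= eqxx big1 ?addr0 // => i /negPf ->.
Qed.

Lemma optimal_exists (a : 'I_n -> 'I_m -> R) (b : 'I_n -> R) :
  (0 < n)%N -> (forall j, 0 <= fbar j) -> exists f, optimal fbar a b f.
Proof.
move=> n_gt0 fbar_ge0.
have feasible_nonempty : [set f : 'I_n -> 'I_m -> R | feasible fbar f] !=set0.
  by eexists; exact: (feasible_one_road (Ordinal n_gt0) fbar_ge0).
have [f f_feas f_min] := compact_EVT_min feasible_nonempty feasible_compact
  (continuous_subspaceT (@social_cost_continuous a b)).
exists f; split; first by rewrite inE in f_feas.
by move=> g g_feas; apply: f_min; rewrite inE.
Qed.

End existence.

Theorem theorem1 (R : realType) (n m : nat) (hn : (0 < n)%N)
  (fbar : 'I_m -> R) (a : 'I_n -> 'I_m -> R) (b : 'I_n -> R)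
  (hfbar : forall j, 0 <= fbar j)
  (ha : forall i j, 0 <= a i j) (hb : forall i, 0 <= b i) :
  exists f : routing R n m, optimal fbar a b f /\ acyclic (Gf f).
Proof.
have [f f_opt] := optimal_exists a b hn hfbar.
exact: optimal_acyclic_exists f_opt.
Qed.
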